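(* Assume (A1)–(A8) and let $(x_i^k)$, $(y_i^k)$, $(\rho_i^k)$ ($i=1,\dots,n$) be generated by Algorithm PS. Then for each $i=1,\dots,n$: (a) $(\rho_i^k)_k$ is bounded; (b) $(x_i^k)_k$ is bounded; (c) there exist constants $\rho_{\min},\rho_{\max}$ (independent of $i$ and $k$) with $0<\rho_{\min}\le\rho_i^k\le\rho_{\max}<\infty$ for all $k\ge0$ and all $i$; (d) $(y_i^k)_k$ is bounded.
   Context: Standing setting. Let $\mathcal H_0,\dots,\mathcal H_{n-1}$ be real Hilbert spaces ($n\ge2$) and $\mathcal H_n:=\mathcal H_0$. Conventions: $0\cdot\infty=0$, $r\cdot\infty=\infty$ for $r>0$, $1/\infty=0$, $1/0=\infty$. For each $i=1,\dots,n$: (A1) $G_i:\mathcal H_0\to\mathcal H_i$ is bounded linear and $G_n=I$; (A2) $A_i:\mathcal H_i\rightrightarrows\mathcal H_i$ is maximal monotone; (A3) $B_i:\mathcal H_i\to\mathcal H_i$ is monotone and $\ell_i$-Lipschitz, $\ell_i\in[0,\infty)$; (A4) $C_i:\mathcal H_i\to\mathcal H_i$ is $\beta_i$-cocoercive with $\beta_i\in(0,\infty]$, i.e. $\langle x-y,C_ix-C_iy\rangle\ge\beta_i\|C_ix-C_iy\|^2$ for all $x,y$ (so $\beta_i=\infty$ means $C_i$ is constant, and then $1/(4\beta_i)=0$); (A5) $D_i:\mathcal H_i\to\mathcal H_i$ is monotone and continuously differentiable with $\|D_i'(x)-D_i'(y)\|\le m_i\|x-y\|$ for all $x,y$, $m_i\in[0,\infty)$;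 (A6) with $T_i:=A_i+B_i+C_i+D_i$, the inclusion $0\in\sum_{i=1}^nG_i^*T_i(G_iz)$ has at least one solution $z\in\mathcal H_0$; (A7) there is $\mathcal I_D\subset\{1,\dots,n\}$ with $m_i>0$ for $i\in\mathcal I_D$ and $m_i=0$, $D_i=0$ for $i\notin\mathcal I_D$. Notation: $D_{i,(u)}(x):=D_i(u)+D_i'(u)(x-u)$; for a maximal monotone $S$, $J_S:=(S+I)^{-1}$. $\boldsymbol{\mathcal H}:=\mathcal H_0\times\mathcal H_1\times\cdots\times\mathcal H_{n-1}$ with inner product $\langle p,\tilde p\rangle_\gamma:=\gamma\langle z,\tilde z\rangle+\sum_{i=1}^{n-1}\langle w_i,\tilde w_i\rangle$ for $p=(z,w_1,\dots,w_{n-1})$, $\tilde p=(\tilde z,\tilde w_1,\dots,\tilde w_{n-1})$, and norm $\|\cdot\|_\gamma$; for such $p$ one writes $w_n:=-\sum_{i=1}^{n-1}G_i^*w_i$. The extended solution set is $\mathcal S:=\{p\in\boldsymbol{\mathcal H}: w_i\in T_i(G_iz),\ i=1,\dots,n\}$ (with $w_n$ as just defined). Algorithm PS. Input: $(z^0,w_1^0,\dots,w_{n-1}^0)\in\boldsymbol{\mathcal H}$, $0<\underline\tau<\overline\tau<2$, $0<\underline\theta<\overline\theta<2$, $\hat\rho>0$, $\hat\delta>0$, $\gamma>0$; $w_n^0:=-\sum_{i=1}^{n-1}G_i^*w_i^0$. For $k=0,1,2,\dots$: for each $i=1,\dots,n$ define $(\rho_i^k,x_i^k,y_i^k)$ as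 follows. (i) If $w_i^k\in T_i(G_iz^k)$: $\rho_i^k=\hat\rho$, $x_i^k=G_iz^k$, $y_i^k=w_i^k$. (ii) Otherwise, if $i\in\mathcal I_D$: $\rho_i^k>0$ and $x_i^k=J_{\rho_i^k(A_i+D_{i,(G_iz^k)})}\big(G_iz^k+\rho_i^kw_i^k-\rho_i^k(B_i+C_i)(G_iz^k)\big)$ satisfy $\underline\theta\le4\ell_i^2(\rho_i^k)^2+(\beta_i^{-1}+\hat\delta)\rho_i^k+(m_i\rho_i^k\|x_i^k-G_iz^k\|)^2\le\overline\theta$, and $y_i^k=\frac{G_iz^k-x_i^k}{\rho_i^k}+w_i^k+[B_i(x_i^k)-B_i(G_iz^k)]+[D_i(x_i^k)-D_{i,(G_iz^k)}(x_i^k)]$. (iii) Otherwise ($i\notin\mathcal I_D$): some $\rho_i^k>0$ is chosen, $x_i^k=J_{\rho_i^kA_i}\big(G_iz^k+\rho_i^kw_i^k-\rho_i^k(B_i+C_i)(G_iz^k)\big)$ and $y_i^k=\frac{G_iz^k-x_i^k}{\rho_i^k}+w_i^k+[B_i(x_i^k)-B_i(G_iz^k)]$. Then set $u_i^k=x_i^k-G_ix_n^k$ ($i=1,\dots,n-1$), $v^k=\sum_{i=1}^nG_i^*y_i^k$, $\varphi_k=\langle z^k,v^k\rangle+\sum_{i=1}^{n-1}\langle w_i^k,u_i^k\rangle-\sum_{i=1}^n\big[\langle x_i^k,y_i^k\rangle+\frac1{4\beta_i}\|x_i^k-G_iz^k\|^2\big]$, $\pi_k=\gamma^{-1}\|v^k\|^2+\sum_{i=1}^{n-1}\|u_i^k\|^2$.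 If $\varphi_k>0$: choose $\tau_k\in[\underline\tau,\overline\tau]$, $\alpha_k=\tau_k\varphi_k/\pi_k$, $z^{k+1}=z^k-\gamma^{-1}\alpha_kv^k$, $w_i^{k+1}=w_i^k-\alpha_ku_i^k$ ($i=1,\dots,n-1$); otherwise $z^{k+1}=z^k$, $w_i^{k+1}=w_i^k$. Finally $w_n^{k+1}=-\sum_{i=1}^{n-1}G_i^*w_i^{k+1}$. (A8): for each $i\in\{1,\dots,n\}\setminus\mathcal I_D$ there are constants $\underline\rho_i,\overline\rho_i$ with $0<\underline\rho_i\le\rho_i^k\le\overline\rho_i<1/\big(\frac1{4\beta_i}+\ell_i\big)$ for all $k\ge0$ whenever $\rho_i^k$ is chosen in case (iii). *)

From HB Require Import structures.
From mathcomp Require Import all_boot all_order all_algebra.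
From mathcomp Require Import all_classical all_reals.
From mathcomp Require Import topology normedtype derive.
Set Implicit Arguments. Unset Strict Implicit. Unset Printing Implicit Defensive.
Import Order.TTheory GRing.Theory Num.Theory.
Import numFieldNormedType.Exports.
Local Open Scope ring_scope.
Local Open Scope classical_set_scope.

HB.mixin Record CompleteNormedModule_isHilbert (R : realType) V
    of CompleteNormedModule R V := {
  inner : V -> V -> R;
  innerC : forall x y, inner x y = inner y x;
  innerDl : forall x y z, inner (x + y) z = inner x z + inner y z;
  innerZl : forall (a : R) x y, inner (a *: x) y = a * inner x y;
  inner_normE : forall x, inner x x = `|x| ^+ 2 }.

#[short(type="hilbertType")]
HB.structure Definition Hilbert (R : realType) :=
  {V of CompleteNormedModule_isHilbert R V & CompleteNormedModule R V}.

Section Ops.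
Variable R : realType.

(* 1/beta with the convention 1/oo = 0 (beta is in (0, oo]) *)
Definition einv (b : \bar R) : R :=
  match b with EFin r => r^-1 | _ => 0 end.

Section OnSpace.
Variable X : hilbertType R.

Definition bounded_linear (Y : hilbertType R) (G : X -> Y) : Prop :=
  (forall (a : R) (x y : X), G (a *: x + y) = a *: G x + G y) /\
  exists M : R, forall x, `|G x| <= M * `|x|.

Definition is_adjoint (Y : hilbertType R) (G : X -> Y) (Gs : Y -> X) : Prop :=
  forall x y, inner (G x) y = inner x (Gs y).

(* set-valued operators X ==> X are represented as X -> set X *)
Definition monotone_op (A : X -> set X) : Prop :=
  forall x y u v, A x u -> A y v -> 0 <= inner (x - y) (u - v).

Definition maximal_monotone (A : X -> set X) : Prop :=
  monotone_op A /\
  forall x u, (forall y v, A y v -> 0 <= inner (x - y) (u - v)) -> A x u.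

Definition monotone_fun (B : X -> X) : Prop :=
  forall x y, 0 <= inner (x - y) (B x - B y).

Definition lipschitz_with (B : X -> X) (l : R) : Prop :=
  forall x y, `|B x - B y| <= l * `|x - y|.

Definition cocoercive (C : X -> X) (beta : \bar R) : Prop :=
  match beta with
  | EFin b => forall x y, b * `|C x - C y| ^+ 2 <= inner (x - y) (C x - C y)
  | +oo%E => forall x y, C x = C y
  | -oo%E => False
  end.

(* D'(u) = 'd D u (Frechet differential); operator-norm Lipschitz bound
   ||D'(u) - D'(v)|| <= m ||u - v||, unfolded on vectors h *)
Definition diff_lipschitz (D : X -> X) (m : R) : Prop :=
  forall u v h, `|'d D u h - 'd D v h| <= m * `|u - v| * `|h|.

Definition linz (D : X -> X) (u x : X) : X := D u + 'd D u (x - u).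

Definition Top (A : X -> set X) (B C D : X -> X) : X -> set X :=
  fun x y => exists2 a, A x a & y = a + B x + C x + D x.

Definition add_fun (A : X -> set X) (F : X -> X) : X -> set X :=
  fun x y => exists2 a, A x a & y = a + F x.

Definition scale_op (rho : R) (S : X -> set X) : X -> set X :=
  fun x y => exists2 s, S x s & y = rho *: s.

(* J_S := (S + I)^{-1}: x \in J_S r  <->  r \in S x + x *)
Definition Jres (S : X -> set X) (r : X) : set X :=
  fun x => exists2 s, S x s & r = s + x.

Definition block_hyp (A : X -> set X) (B C D : X -> X) (l : R) (beta : \bar R)
    (m : R) : Prop :=
  [/\ maximal_monotone A,
      monotone_fun B /\ 0 <= l /\ lipschitz_with B l,
      (0 < beta)%E /\ cocoercive C beta &
      [/\ monotone_fun D, (forall u, differentiable D u),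
          0 <= m & diff_lipschitz D m]].

(* One block of one iteration of Algorithm PS: rules (i), (ii), (iii)
   defining (rho_i^k, x_i^k, y_i^k) from G_i z^k and w_i^k.
   inD = (i \in I_D). *)
Definition ps_block (A : X -> set X) (B C D : X -> X) (l : R) (beta : \bar R)
    (m : R) (inD : bool) (rhohat thlo thhi dhat : R)
    (Gz w : X) (rho : R) (x y : X) : Prop :=
  let r := Gz + rho *: w - rho *: (B Gz + C Gz) in
  [/\ Top A B C D Gz w -> [/\ rho = rhohat, x = Gz & y = w],
      ~ Top A B C D Gz w -> inD ->
        [/\ 0 < rho,
            Jres (scale_op rho (add_fun A (linz D Gz))) r x,
            thlo <= 4 * l ^+ 2 * rho ^+ 2 + (einv beta + dhat) * rho
                    + (m * rho * `|x - Gz|) ^+ 2 <= thhi &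
            y = rho^-1 *: (Gz - x) + w + (B x - B Gz) + (D x - linz D Gz x)] &
      ~ Top A B C D Gz w -> ~~ inD ->
        [/\ 0 < rho,
            Jres (scale_op rho A) r x &
            y = rho^-1 *: (Gz - x) + w + (B x - B Gz)]].

End OnSpace.

(* Block spaces: blocks i = 1..n are indexed by o : option 'I_(n-1),
   Some j <-> i = j+1 (space H_{j+1}), None <-> i = n (space H_n = H_0). *)
Definition Hblk (H0 : hilbertType R) (m : nat) (Hs : 'I_m -> hilbertType R)
  (o : option 'I_m) : hilbertType R :=
  match o with Some j => Hs j | None => H0 end.

End Ops.

(* The iterates stay bounded because the algorithm is a relaxed projection
   method: by monotonicity of every block, the affine function phi_k is
   nonpositive at any extended solution p*, so ||p^k - p*||_gamma is
   nonincreasing and z^k, w^k are bounded.  Each block then sees bounded data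
   G_i z^k, w_i^k.  Its resolvent is nonexpansive with respect to a fixed
   solution point, which bounds x_i^k once rho_i^k is bounded above; the
   step-size rules bound rho_i^k above and, using the bound on x_i^k,
   below; y_i^k is then bounded by its explicit formula. *)

From HB Require Import structures.
From mathcomp Require Import all_boot all_order all_algebra.
From mathcomp Require Import all_classical all_reals.
From mathcomp Require Import topology normedtype derive.
From mathcomp Require Import ring lra.
Import Order.TTheory GRing.Theory Num.Theory.
Import numFieldNormedType.Exports.
Local Open Scope ring_scope.
Local Open Scope classical_set_scope.

Lemma ler_of_sqr_le_mul {R : realDomainType} {a b : R} :
  0 <= a -> 0 <= b -> a ^+ 2 <= a * b -> a <= b.
Proof.
rewrite le_eqVlt => /predU1P[<- //|a0] _.
by rewrite expr2 ler_pM2l.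
Qed.

Section InnerProduct.
Context {R : realType} {X : hilbertType R}.
Implicit Types x y z : X.

Lemma innerDr x y z : inner x (y + z) = inner x y + inner x z.
Proof. by rewrite innerC innerDl !(innerC x). Qed.

Lemma innerZr (a : R) x y : inner x (a *: y) = a * inner x y.
Proof. by rewrite innerC innerZl innerC. Qed.

Lemma inner0l y : inner 0 y = 0.
Proof. by rewrite -(scale0r (0 : X)) innerZl mul0r. Qed.

Lemma inner0r y : inner y 0 = 0.
Proof. by rewrite innerC inner0l. Qed.

Lemma innerNl x y : inner (- x) y = - inner x y.
Proof. by rewrite -scaleN1r innerZl mulN1r. Qed.

Lemma innerNr x y : inner x (- y) = - inner x y.
Proof. by rewrite innerC innerNl innerC. Qed.

Lemma innerBl x y z : inner (x - y) z = inner x z - inner y z.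
Proof. by rewrite innerDl innerNl. Qed.

Lemma innerBr x y z : inner x (y - z) = inner x y - inner x z.
Proof. by rewrite innerDr innerNr. Qed.

Lemma inner_sumr (I : Type) (r : seq I) (P : pred I) (F : I -> X) x :
  inner x (\sum_(i <- r | P i) F i) = \sum_(i <- r | P i) inner x (F i).
Proof. by apply: (big_morph (inner x)) => [u v|]; rewrite ?innerDr ?inner0r. Qed.

Lemma sqr_normD x y : `|x + y| ^+ 2 = `|x| ^+ 2 + 2 * inner x y + `|y| ^+ 2.
Proof. by rewrite -!inner_normE innerDl !innerDr (innerC y x); ring. Qed.

Lemma sqr_normB x y : `|x - y| ^+ 2 = `|x| ^+ 2 - 2 * inner x y + `|y| ^+ 2.
Proof. by rewrite sqr_normD innerNr normrN; ring. Qed.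

Lemma sqr_normBZ x y (a : R) :
  `|x - a *: y| ^+ 2 = `|x| ^+ 2 - 2 * a * inner x y + a ^+ 2 * `|y| ^+ 2.
Proof. by rewrite sqr_normB innerZr normrZ exprMn real_normK ?num_real //; ring. Qed.

Lemma inner_inj y z : (forall x, inner x y = inner x z) -> y = z.
Proof.
move=> yz; apply/eqP; rewrite -subr_eq0 -normr_eq0 -sqrf_eq0 -inner_normE.
by rewrite innerBr yz subrr.
Qed.

Lemma cauchy_schwarz x y : `|inner x y| <= `|x| * `|y|.
Proof.
have [->|y0] := eqVneq y 0; first by rewrite inner0r !normr0 mulr0.
have ny : 0 < `|y| ^+ 2 by rewrite exprn_gt0 // normr_gt0.
pose t := inner x y / `|y| ^+ 2.
have : 0 <= `|x - t *: y| ^+ 2 by rewrite exprn_ge0.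
rewrite sqr_normBZ => h.
have iny : 0 < (`|y| ^+ 2)^-1 by rewrite invr_gt0.
have h2 : inner x y ^+ 2 <= (`|x| * `|y|) ^+ 2.
  rewrite exprMn -subr_ge0 -(pmulr_rge0 _ iny).
  suff -> : (`|y| ^+ 2)^-1 * (`|x| ^+ 2 * `|y| ^+ 2 - inner x y ^+ 2) =
      `|x| ^+ 2 - 2 * t * inner x y + t ^+ 2 * `|y| ^+ 2 by [].
  by rewrite /t; field; rewrite normr_eq0.
by rewrite -ler_sqr ?nnegrE ?mulr_ge0 // real_normK ?num_real.
Qed.

Lemma inner_le x y : inner x y <= `|x| * `|y|.
Proof. exact: le_trans (ler_norm _) (cauchy_schwarz x y). Qed.

Lemma inner_ge x y : - (`|x| * `|y|) <= inner x y.
Proof. by rewrite lerNl -innerNr -(normrN y) inner_le. Qed.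

End InnerProduct.

(** * Differentiable monotone operators *)

Section Differential.
Context {R : realType} {X : hilbertType R}.

Definition inner_left (e : X) : X -> R := inner e.

Lemma inner_left_linear (e : X) : linear (inner_left e).
Proof. by move=> a u v; rewrite /inner_left innerDr innerZr. Qed.

HB.instance Definition _ (e : X) :=
  GRing.isLinear.Build R X R *:%R (inner_left e) (inner_left_linear e).

Lemma inner_left_continuous (e : X) : continuous (inner_left e).
Proof.
apply: bounded_linear_continuous; apply/linear_boundedP.
near=> r => x; rewrite /inner_left.
by rewrite (le_trans (cauchy_schwarz e x)) // ler_wpM2r.
Unshelve. all: by end_near. Qed.

Context {D : X -> X} {m : R}.
Hypothesis D_diff : forall u, differentiable D u.
Hypothesis D'_lip : diff_lipschitz D m.
Hypothesis m_ge0 : 0 <= m.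

(* Mean value theorem for [s |-> <e, D (u + s h)>], [e] being the remainder. *)
Lemma diff_remainder_le (u h : X) :
  `|D (u + h) - D u - 'd D u h| <= m * `|h| ^+ 2.
Proof.
set e := D (u + h) - D u - 'd D u h.
pose p : R -> X := ( *:%R^~ h) + cst u.
have pE s : p s = s *: h + u by [].
have dp s : is_diff s p ( *:%R^~ h).
  by rewrite -[X in is_diff _ _ X]addr0; exact: is_diffD.
pose f : R -> R := inner_left e \o (D \o p).
have de y : differentiable (inner_left e) y.
  exact/linear_differentiable/inner_left_continuous.
have dDp (s : R) : differentiable (D \o p) s by apply: differentiable_comp.
have fdiff (s : R) : differentiable f s by apply: differentiable_comp.
have df (s : R) : is_derive s 1 f (inner e ('d D (p s) h)).
  apply: DeriveDef; first exact: diff_derivable.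
  rewrite deriveE //.
  rewrite diff_comp // (@diff_lin R X R (inner_left e)); last exact: inner_left_continuous.
  by rewrite diff_comp // /= diff_val scale1r.
have [c c01 hc] := MVT ltr01 (fun s _ => df s)
  (continuous_subspaceT (fun s => differentiable_continuous (fdiff s))).
move: c01; rewrite in_itv /= => /andP[c0 c1].
have hf : f 1 - f 0 = inner e (D (u + h) - D u).
  by rewrite /f /= /inner_left !pE scale1r scale0r add0r (addrC h) innerBr.
rewrite hf subr0 mulr1 in hc.
have key : `|e| ^+ 2 <= `|e| * (m * `|h| ^+ 2).
  rewrite -inner_normE {2}/e innerBr hc -innerBr.
  apply: le_trans (inner_le _ _) _; apply: ler_wpM2l => //.
  apply: le_trans (D'_lip _ _ _) _.
  rewrite pE addrK.
  rewrite normrZ gtr0_norm // -!mulrA ler_wpM2l // expr2.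
  by rewrite ler_piMl ?mulr_ge0 // ltW.
by apply: ler_of_sqr_le_mul key; rewrite ?mulr_ge0.
Qed.

Hypothesis D_mono : monotone_fun D.

(* [0 <= <t h, D (u + t h) - D u> = t^2 <h, D'(u) h> + O(t^3)] as [t -> 0+]. *)
Lemma monotone_diff_ge0 (u h : X) : 0 <= inner h ('d D u h).
Proof.
set K := m * `|h| ^+ 3.
have K0 : 0 <= K by rewrite mulr_ge0 ?exprn_ge0.
have near0 t : 0 < t -> 0 <= inner h ('d D u h) + t * K.
  move=> t0; set r := D (u + t *: h) - D u - 'd D u (t *: h).
  have := D_mono (u + t *: h) u.
  have -> : D (u + t *: h) - D u = t *: 'd D u h + r by rewrite /r -linearZ [RHS]addrC subrK.
  rewrite [u + _]addrC addrK innerZl innerDr innerZr pmulr_rge0 // => hge.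
  have hr : inner h r <= t * (t * K).
    apply: le_trans (inner_le h r) _.
    apply: le_trans (ler_wpM2l (normr_ge0 h) (diff_remainder_le u (t *: h))) _.
    rewrite normrZ gtr0_norm // exprMn /K; nra.
  by rewrite -(pmulr_rge0 _ t0); nra.
apply/ler_addgt0Pr => eps eps0.
have K1 : 0 < K + 1 by rewrite ltr_wpDl.
have tK : eps / (K + 1) * K <= eps.
  by rewrite mulrAC ler_pdivrMr // ler_pM2l // lerDl.
have := near0 _ (divr_gt0 eps0 K1); lra.
Qed.

End Differential.

Section BoundedSeq.
Context {R : realType}.

Definition bounded_seq {V : normedModType R} (u : nat -> V) : Prop :=
  exists M : R, forall k, `|u k| <= M.

Lemma bounded_seqP {V : normedModType R} {u : nat -> V} :
  bounded_seq u -> exists2 M, 0 <= M & forall k, `|u k| <= M.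
Proof. by case=> M hM; exists M => //; exact: le_trans (normr_ge0 _) (hM 0%N). Qed.

Lemma bounded_seq_le {V : normedModType R} {u : nat -> V} (r : nat -> R) :
  (forall k, `|u k| <= r k) -> bounded_seq r -> bounded_seq u.
Proof. by move=> ur [M hM]; exists M => k; rewrite (le_trans (ur k)) // ler_normlW. Qed.

Lemma bounded_seq_norm {V : normedModType R} {u : nat -> V} :
  bounded_seq u -> bounded_seq (fun k => `|u k|).
Proof. by case=> M hM; exists M => k; rewrite normr_id. Qed.

Lemma bounded_seq_cst {V : normedModType R} (a : V) : bounded_seq (fun=> a).
Proof. by exists `|a|. Qed.

Lemma bounded_seqD {V : normedModType R} {u v : nat -> V} :
  bounded_seq u -> bounded_seq v -> bounded_seq (fun k => u k + v k).
Proof.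
move=> [Mu hu] [Mv hv]; exists (Mu + Mv) => k.
by rewrite (le_trans (ler_normD _ _)) // lerD.
Qed.

Lemma bounded_seqN {V : normedModType R} {u : nat -> V} :
  bounded_seq u -> bounded_seq (fun k => - u k).
Proof. by case=> M hM; exists M => k; rewrite normrN. Qed.

Lemma bounded_seqB {V : normedModType R} {u v : nat -> V} :
  bounded_seq u -> bounded_seq v -> bounded_seq (fun k => u k - v k).
Proof. by move=> bu /bounded_seqN; exact: bounded_seqD. Qed.

Lemma bounded_seqZ {V : normedModType R} {a : nat -> R} {u : nat -> V} :
  bounded_seq a -> bounded_seq u -> bounded_seq (fun k => a k *: u k).
Proof.
move=> /bounded_seqP[Ma Ma0 ha] /bounded_seqP[Mu Mu0 hu].
by exists (Ma * Mu) => k; rewrite normrZ ler_pM.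
Qed.

Lemma bounded_seqM {a b : nat -> R} : bounded_seq a -> bounded_seq b ->
  bounded_seq (fun k => a k * b k).
Proof.
move=> /bounded_seqP[Ma Ma0 ha] /bounded_seqP[Mb Mb0 hb].
by exists (Ma * Mb) => k; rewrite normrM ler_pM.
Qed.

Lemma bounded_seq_sum {V : normedModType R} (I : finType) (F : I -> nat -> V) :
  (forall i, bounded_seq (F i)) -> bounded_seq (fun k => \sum_i F i k).
Proof.
move=> /boolp.choice[M hM]; exists (\sum_i M i) => k.
by rewrite (le_trans (ler_norm_sum _ _ _)) // ler_sum.
Qed.

Lemma bounded_seq_comp {V W : normedModType R} {f : V -> W} {a b : R}
    {u : nat -> V} :
  (forall v, `|f v| <= a + b * `|v|) -> bounded_seq u ->
  bounded_seq (fun k => f (u k)).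
Proof.
move=> hf /bounded_seqP[M M0 hu]; exists (a + `|b| * M) => k.
rewrite (le_trans (hf _)) // lerD2l (le_trans (ler_norm _)) // normrM normr_id.
by rewrite ler_pM ?hu.
Qed.

Lemma bounded_seq_linear {V W : normedModType R} {f : V -> W} {M : R}
    {u : nat -> V} :
  (forall v, `|f v| <= M * `|v|) -> bounded_seq u -> bounded_seq (fun k => f (u k)).
Proof. by move=> hf; apply: (bounded_seq_comp (a := 0)) => v; rewrite add0r. Qed.

Lemma bounded_seq_sqr_dist {V : normedModType R} {u : nat -> V} (c : V) (M : R) :
  (forall k, `|u k - c| ^+ 2 <= M) -> bounded_seq u.
Proof.
move=> hu; exists (`|c| + (1 + M)) => k.
have -> : u k = (u k - c) + c by rewrite subrK.
rewrite (le_trans (ler_normD _ _)) // addrC lerD2l.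
have := hu k; have := normr_ge0 (u k - c); nra.
Qed.

End BoundedSeq.

Lemma bounded_seq_lipschitz {R : realType} {X : hilbertType R} {f : X -> X} {l : R}
    {u : nat -> X} :
  lipschitz_with f l -> bounded_seq u -> bounded_seq (fun k => f (u k)).
Proof.
move=> lip; apply: (bounded_seq_comp (a := `|f 0|) (b := l)) => v.
have := lip v 0; rewrite subr0 => fl.
by rewrite -[f v](subrK (f 0)) (le_trans (ler_normD _ _)) // addrC lerD2l.
Qed.

(** * Cocoercive operators *)

Section Cocoercive.
Context {R : realType} {X : hilbertType R}.
Context {C : X -> X} {beta : \bar R}.
Hypotheses (beta_gt0 : (0 < beta)%E) (C_coco : cocoercive C beta).

Lemma einv_ge0 : 0 <= einv beta.
Proof. by case: beta beta_gt0 => //= r; rewrite lte_fin invr_ge0 => /ltW. Qed.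

Lemma cocoercive_lipschitz : lipschitz_with C (einv beta).
Proof.
move=> x y; move: beta_gt0 C_coco; case: beta => [r||] //=; last first.
  by move=> _ Ccst; rewrite (Ccst x y) subrr normr0 mul0r.
rewrite lte_fin => r0 /(_ x y) Cr.
apply: ler_of_sqr_le_mul => //; first by rewrite mulr_ge0 // invr_ge0 (ltW r0).
rewrite mulrCA ler_pdivlMl // [_ * `|x - y|]mulrC.
exact: le_trans Cr (inner_le _ _).
Qed.

(* completing the square in [r d^2 - a d >= - a^2 / (4 r)] *)
Lemma cocoercive_inner_ge x z g :
  - (einv beta / 4 * `|x - z| ^+ 2) <= inner (x - g) (C z - C g).
Proof.
move: beta_gt0 C_coco; case: beta => [r||] //=; last first.
  by move=> _ Ccst; rewrite (Ccst z g) subrr inner0r !mul0r oppr0.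
rewrite lte_fin => r0 /(_ z g) Cr.
have -> : x - g = (z - g) + (x - z) by rewrite [RHS]addrC addrA subrK.
rewrite innerDl.
have := inner_ge (x - z) (C z - C g); move: Cr.
set a := `|x - z|; set d := `|C z - C g| => Cr hge.
have : - (r^-1 / 4 * a ^+ 2) <= r * d ^+ 2 - a * d.
  rewrite -subr_ge0 -(pmulr_rge0 _ r0).
  suff -> : r * (r * d ^+ 2 - a * d - - (r^-1 / 4 * a ^+ 2)) = (r * d - a / 2) ^+ 2.
    exact: sqr_ge0.
  by field; exact: lt0r_neq0.
lra.
Qed.

Lemma cocoercive_monotone : monotone_fun C.
Proof.
move=> x y; have := cocoercive_inner_ge x x y.
by rewrite subrr normr0 expr0n /= mulr0 oppr0.
Qed.

End Cocoercive.

Lemma norm_sub_le_of_monotone {R : realType} {X : hilbertType R} (x1 x2 s1 s2 : X) :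
  0 <= inner (x1 - x2) (s1 - s2) -> `|x1 - x2| <= `|(s1 + x1) - (s2 + x2)|.
Proof.
move=> mono; apply: ler_of_sqr_le_mul => //.
rewrite -inner_normE; apply: le_trans (inner_le _ _).
by rewrite opprD addrACA [in X in _ <= X]innerDr lerDr.
Qed.

(** * One block of Algorithm PS *)

Section Block.
Context {R : realType} {X : hilbertType R}.
Context {A : X -> set X} {B C D : X -> X} {l : R} {beta : \bar R} {m : R}.
Hypothesis hb : block_hyp A B C D l beta m.

Let A_mono : monotone_op A. Proof. by case: hb => -[]. Qed.
Let B_mono : monotone_fun B. Proof. by case: hb => _ []. Qed.
Let B_lip : lipschitz_with B l. Proof. by case: hb => _ [_ []]. Qed.
Let beta_gt0 : (0 < beta)%E. Proof. by case: hb => _ _ []. Qed.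
Let C_coco : cocoercive C beta. Proof. by case: hb => _ _ []. Qed.
Let D_mono : monotone_fun D. Proof. by case: hb => _ _ _ []. Qed.
Let D_diff u : differentiable D u. Proof. by case: hb => _ _ _ []. Qed.
Let m_ge0 : 0 <= m. Proof. by case: hb => _ _ _ []. Qed.
Let D'_lip : diff_lipschitz D m. Proof. by case: hb => _ _ _ []. Qed.

Local Notation T := (Top A B C D).

Lemma Top_monotone x1 y1 x2 y2 : T x1 y1 -> T x2 y2 ->
  0 <= inner (x1 - x2) (y1 - y2).
Proof.
move=> [a1 ha1 ->] [a2 ha2 ->].
have := A_mono _ _ _ _ ha1 ha2; have := B_mono x1 x2; have := D_mono x1 x2.
have := cocoercive_monotone beta_gt0 C_coco x1 x2.
rewrite !innerBr !innerDr; lra.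
Qed.

Lemma linzB u x1 x2 : linz D u x1 - linz D u x2 = 'd D u (x1 - x2).
Proof. by rewrite /linz opprD addrACA subrr add0r -linearB opprB addrA subrK. Qed.

Lemma linz_monotone u : monotone_fun (linz D u).
Proof. by move=> x1 x2; rewrite linzB (monotone_diff_ge0 D_diff D'_lip m_ge0 D_mono). Qed.

Lemma linz_remainder_le u x : `|D x - linz D u x| <= m * `|x - u| ^+ 2.
Proof.
have := diff_remainder_le D_diff D'_lip m_ge0 u (x - u).
by rewrite [u + _]addrC subrK /linz opprD addrA.
Qed.

Context {inD : bool} {rhohat thlo thhi dhat : R}.
Hypothesis D_off : ~~ inD -> forall h, D h = 0.

Local Notation ps := (ps_block A B C D l beta m inD rhohat thlo thhi dhat).

Lemma linz_off u x : ~~ inD -> linz D u x = 0.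
Proof.
move=> /D_off D0; have -> : D = cst 0 by apply/funext.
by rewrite /linz diff_cst addr0.
Qed.

(* In case (iii) [D = 0], so its linearization vanishes and the step has the
   same form as in case (ii). *)
Lemma ps_block_nonsol {Gz w rho x y} : ps Gz w rho x y -> ~ T Gz w ->
  [/\ 0 < rho,
      Jres (scale_op rho (add_fun A (linz D Gz)))
        (Gz + rho *: w - rho *: (B Gz + C Gz)) x &
      y = rho^-1 *: (Gz - x) + w + (B x - B Gz) + (D x - linz D Gz x)].
Proof.
case=> _ hii hiii nT; case: (boolP inD) => iD; first by case: (hii nT iD).
have [rho0 [_ [a ha ->] ->] ->] := hiii nT iD.
split => //; last by rewrite D_off // linz_off // subrr addr0.
exists (rho *: a) => //; exists a => //.
by exists a => //; rewrite linz_off // addr0.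
Qed.

Lemma ps_block_graph {Gz w rho x y} : ps Gz w rho x y -> ~ T Gz w ->
  exists2 a, A x a & y = a + B x + C Gz + D x.
Proof.
move=> hp nT; have [rho0 [_ [_ [a ha ->] ->] hr] ->] := ps_block_nonsol hp nT.
exists a => //.
have -> : Gz - x = rho *: (a + linz D Gz x - w + (B Gz + C Gz)).
  apply: inner_inj => d; move/(congr1 (inner d)): hr.
  by rewrite !(innerDr, innerNr, innerZr); lra.
rewrite scalerA mulVf ?gt_eqF // scale1r.
by apply: inner_inj => d; rewrite !(innerDr, innerNr); lra.
Qed.

Lemma ps_block_fejer {Gz w rho x y g t} : ps Gz w rho x y -> T g t ->
  - (einv beta / 4 * `|x - Gz| ^+ 2) <= inner (x - g) (y - t).
Proof.
move=> hp hT; have [T1|nT] := pselect (T Gz w).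
  case: hp => /(_ T1) [_ -> ->] _ _.
  by rewrite subrr normr0 expr0n /= mulr0 oppr0; exact: Top_monotone.
have [a ha ->] := ps_block_graph hp nT; case: hT => [a' ha' ->].
have := A_mono _ _ _ _ ha ha'; have := B_mono x g; have := D_mono x g.
have := cocoercive_inner_ge beta_gt0 C_coco x Gz g.
by rewrite !(innerDr, innerNr); lra.
Qed.

Lemma linz_remainder_bounded {u v : nat -> X} : bounded_seq u -> bounded_seq v ->
  bounded_seq (fun k => D (v k) - linz D (u k) (v k)).
Proof.
move=> bu bv.
apply: (bounded_seq_le (fun k => m * (`|v k - u k| * `|v k - u k|))).
  by move=> k; rewrite -expr2 linz_remainder_le.
have bvu := bounded_seq_norm (bounded_seqB bv bu).
exact: bounded_seqM (bounded_seq_cst m) (bounded_seqM bvu bvu).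
Qed.

Lemma linz_bounded {u : nat -> X} v : bounded_seq u ->
  bounded_seq (fun k => linz D (u k) v).
Proof.
move=> bu.
suff -> : (fun k => linz D (u k) v) = fun k => D v - (D v - linz D (u k) v).
  exact: bounded_seqB (bounded_seq_cst _) (linz_remainder_bounded bu (bounded_seq_cst v)).
by apply/funext => k; rewrite opprB addrC subrK.
Qed.

Context {Gz w : nat -> X} {rho : nat -> R} {x y : nat -> X} {g t : X}.
Hypothesis hps : forall k, ps (Gz k) (w k) (rho k) (x k) (y k).
Hypothesis hsol : T g t.
Hypotheses (Gz_bnd : bounded_seq Gz) (w_bnd : bounded_seq w).
Hypothesis rhohat_gt0 : 0 < rhohat.

Lemma ps_rho_gt0 k : 0 < rho k.
Proof.
have [T1|nT] := pselect (T (Gz k) (w k)); first by case: (hps k) => /(_ T1) [->].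
by case: (ps_block_nonsol (hps k) nT).
Qed.

Lemma ps_rho_bounds {lo hi} : (forall k, ~ T (Gz k) (w k) -> lo <= rho k <= hi) ->
  forall k, Num.min lo rhohat <= rho k <= Num.max hi rhohat.
Proof.
move=> hnon k; have [T1|nT] := pselect (T (Gz k) (w k)).
  by case: (hps k) => /(_ T1) [-> _ _]; rewrite ge_min le_max lexx !orbT.
by have /andP[lo_r r_hi] := hnon k nT; rewrite ge_min le_max lo_r r_hi.
Qed.

Lemma ps_x_bounded {U} : (forall k, rho k <= U) -> bounded_seq x.
Proof.
move=> rhoU; case: hsol => a0 ha0 _.
pose e k := w k - (B (Gz k) + C (Gz k)) - (a0 + linz D (Gz k) g).
pose r k := Gz k - g + rho k *: e k.
have e_bnd : bounded_seq e.
  apply: bounded_seqB; last exact: bounded_seqD (bounded_seq_cst _) (linz_bounded _ Gz_bnd).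
  apply: bounded_seqB w_bnd (bounded_seqD _ _).
    exact: bounded_seq_lipschitz B_lip Gz_bnd.
  exact: bounded_seq_lipschitz (cocoercive_lipschitz beta_gt0 C_coco) Gz_bnd.
have r_bnd : bounded_seq r.
  apply: bounded_seqD (bounded_seqB Gz_bnd (bounded_seq_cst g)) (bounded_seqZ _ e_bnd).
  by exists U => k; rewrite ger0_norm ?rhoU // (ltW (ps_rho_gt0 k)).
apply: (bounded_seq_le (fun k => `|Gz k| + (`|g| + `|r k|))); last first.
  exact: bounded_seqD (bounded_seq_norm Gz_bnd)
    (bounded_seqD (bounded_seq_cst _) (bounded_seq_norm r_bnd)).
move=> k; have [T1|nT] := pselect (T (Gz k) (w k)).
  case: (hps k) => /(_ T1) [_ -> _] _ _.
  by rewrite lerDl addr_ge0.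
rewrite ler_wpDl // -[x k](addrNK g) addrC (le_trans (ler_normD _ _)) // lerD2l.
have [rho0 [_ [_ [a ha ->] ->] hr] _] := ps_block_nonsol (hps k) nT.
have -> : r k = rho k *: (a + linz D (Gz k) (x k)) + x k -
    (rho k *: (a0 + linz D (Gz k) g) + g).
  rewrite /r /e -hr; apply: inner_inj => d.
  by rewrite !(innerDr, innerNr, innerZr); lra.
apply: norm_sub_le_of_monotone; rewrite -scalerBr innerZr pmulr_rge0 //.
rewrite opprD addrACA innerDr addr_ge0 //; first exact: A_mono.
by rewrite linz_monotone.
Qed.

Lemma ps_y_bounded {lo} : 0 < lo -> (forall k, lo <= rho k) -> bounded_seq x ->
  bounded_seq y.
Proof.
move=> lo0 lo_rho x_bnd.
pose r k := `|(rho k)^-1 *: (Gz k - x k)| + `|w k| + `|B (x k) - B (Gz k)|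
  + `|D (x k) - linz D (Gz k) (x k)|.
apply: (bounded_seq_le r) => [k|].
  have [T1|nT] := pselect (T (Gz k) (w k)).
    case: (hps k) => /(_ T1) [_ _ ->] _ _.
    by rewrite /r [_ + `|w k|]addrC -!addrA lerDl !addr_ge0.
  have [_ _ ->] := ps_block_nonsol (hps k) nT.
  by rewrite /r (le_trans (ler_normD _ _)) // lerD2r (le_trans (ler_normD _ _)) //
    lerD2r ler_normD.
have iv_bnd : bounded_seq (fun k => (rho k)^-1).
  exists lo^-1 => k; rewrite ger0_norm ?invr_ge0 ?(ltW (ps_rho_gt0 k)) //.
  by rewrite lef_pV2 ?posrE ?ps_rho_gt0.
apply: bounded_seqD (bounded_seq_norm (linz_remainder_bounded Gz_bnd x_bnd)).
apply: bounded_seqD; last first.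
  exact: bounded_seq_norm (bounded_seqB (bounded_seq_lipschitz B_lip x_bnd)
    (bounded_seq_lipschitz B_lip Gz_bnd)).
apply: bounded_seqD _ (bounded_seq_norm w_bnd).
exact/bounded_seq_norm/bounded_seqZ/bounded_seqB.
Qed.

Lemma ps_rho_le_inD k : inD -> 0 < dhat -> ~ T (Gz k) (w k) -> rho k <= thhi / dhat.
Proof.
move=> iD dhat0 nT; case: (hps k) => _ /(_ nT iD) [rho0 _ /andP[_ hi] _] _.
rewrite ler_pdivlMr //; apply: le_trans hi.
have := einv_ge0 beta_gt0; have := sqr_ge0 (m * rho k * `|x k - Gz k|).
have : 0 <= 4 * l ^+ 2 * rho k ^+ 2.
  by apply: mulr_ge0; [apply: mulr_ge0 |]; rewrite ?sqr_ge0.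
nra.
Qed.

(* Rule (ii) gives [thlo <= rho_k * W] as soon as [rho_k <= U] and
   [||x_k - G z_k|| <= Q]. *)
Lemma ps_rho_ge_inD {U} : inD -> 0 < thlo -> 0 < dhat -> (forall k, rho k <= U) ->
  bounded_seq x -> exists2 lo, 0 < lo & forall k, ~ T (Gz k) (w k) -> lo <= rho k.
Proof.
move=> iD thlo0 dhat0 rhoU x_bnd.
have [Q _ hQ] := bounded_seqP (bounded_seqB x_bnd Gz_bnd).
have U0 : 0 <= U by rewrite (le_trans (ltW (ps_rho_gt0 0))).
pose W := 4 * l ^+ 2 * U + (einv beta + dhat) + m ^+ 2 * U * Q ^+ 2.
have eb0 := einv_ge0 beta_gt0.
have W0 : 0 < W.
  have : 0 <= 4 * l ^+ 2 * U by apply: mulr_ge0; [apply: mulr_ge0 |]; rewrite ?sqr_ge0.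
  have : 0 <= m ^+ 2 * U * Q ^+ 2 by apply: mulr_ge0; [apply: mulr_ge0 |]; rewrite ?sqr_ge0.
  rewrite /W; lra.
exists (thlo / W); first exact: divr_gt0.
move=> k nT; case: (hps k) => _ /(_ nT iD) [rho0 _ /andP[lo _] _] _.
rewrite ler_pdivrMr //; apply: le_trans lo _.
set q := `|x k - Gz k|.
have rU : rho k * rho k <= rho k * U := ler_wpM2l (ltW rho0) (rhoU k).
have qQ : q * q <= Q * Q by rewrite ler_pM ?normr_ge0 ?hQ.
have rq : rho k * (q * q) <= U * (Q * Q).
  by rewrite ler_pM ?mulr_ge0 ?normr_ge0 ?(ltW rho0) ?rhoU.
have := ler_wpM2l (sqr_ge0 l) rU.
have := ler_wpM2l (mulr_ge0 (sqr_ge0 m) (ltW rho0)) rq.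
rewrite /W; nra.
Qed.

Lemma ps_block_bounds : 0 < thlo -> 0 < dhat ->
  (~~ inD -> exists rlo rhi, 0 < rlo /\
     forall k, ~ T (Gz k) (w k) -> rlo <= rho k <= rhi) ->
  [/\ exists lo hi, 0 < lo /\ forall k, lo <= rho k <= hi,
      bounded_seq x & bounded_seq y].
Proof.
move=> thlo0 dhat0 hA8.
suff [lo [hi [lo0 hr]]] : exists lo hi, 0 < lo /\ forall k, lo <= rho k <= hi.
  have x_bnd : bounded_seq x by apply: (@ps_x_bounded hi) => k; case/andP: (hr k).
  split=> //; first by exists lo, hi.
  by apply: (ps_y_bounded lo0) => // k; case/andP: (hr k).
case: (boolP inD) => iD; last first.
  have [rlo [rhi [rlo0 hnon]]] := hA8 iD.
  exists (Num.min rlo rhohat), (Num.max rhi rhohat).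
  by split; [rewrite lt_min rlo0 | exact: ps_rho_bounds].
have hnon k : ~ T (Gz k) (w k) -> 0 <= rho k <= thhi / dhat.
  by move=> nT; rewrite ltW ?ps_rho_gt0 ?ps_rho_le_inD.
have rho_hi k : rho k <= Num.max (thhi / dhat) rhohat.
  by case/andP: (ps_rho_bounds hnon k).
have [lo lo0 hlo] := ps_rho_ge_inD iD thlo0 dhat0 rho_hi (ps_x_bounded rho_hi).
exists (Num.min lo rhohat), (Num.max (thhi / dhat) rhohat).
split; first by rewrite lt_min lo0.
by apply: ps_rho_bounds => k nT; rewrite hlo ?ps_rho_le_inD.
Qed.

End Block.

Lemma big_option {V : zmodType} {k : nat} (F : option 'I_k -> V) :
  \sum_(o : option 'I_k) F o = F None + \sum_(j < k) F (Some j).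
Proof.
rewrite (bigD1 None) //=; congr (_ + _).
rewrite (reindex_omap Some (fun o => o)) //=; last by case.
by apply: eq_bigl => j; rewrite eqxx.
Qed.

Lemma adjoint_norm_le {R : realType} {X Y : hilbertType R} {G : X -> Y} {Gs : Y -> X} :
  bounded_linear G -> is_adjoint G Gs ->
  exists M : R, forall v, `|Gs v| <= M * `|v|.
Proof.
move=> [_ [M hM]] adj; exists `|M| => v.
apply: ler_of_sqr_le_mul; rewrite ?mulr_ge0 //.
rewrite -inner_normE -adj; apply: le_trans (inner_le _ _) _.
rewrite mulrA [_ * `|M|]mulrC; apply: ler_wpM2r => //.
by apply: le_trans (hM _) _; apply: ler_wpM2r => //; exact: ler_norm.
Qed.

(** * Fejer monotonicity of the iterates *)

(* Scalar form of: a relaxed projection onto a halfspace [{phi <= 0}] separating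
   the current point from the target does not increase the distance to it. *)
Lemma relaxed_projection_decrease {R : realType} {d d' a P phi pi tau : R} :
  d' = d - 2 * a * P + a ^+ 2 * pi -> phi <= P -> 0 < phi ->
  0 <= tau <= 2 -> 0 <= pi -> a = tau * phi / pi -> d' <= d.
Proof.
move=> -> phiP phi0 /andP[tau0 tau2] pi0 ->.
have [->|pi_neq0] := eqVneq pi 0; first by rewrite invr0 !(mulr0, mul0r); lra.
have a0 : 0 <= tau * phi / pi by rewrite divr_ge0 // mulr_ge0 // ltW.
have -> : (tau * phi / pi) ^+ 2 * pi = tau * phi / pi * (tau * phi).
  by rewrite expr2 -mulrA divfK.
have : 0 <= tau * phi / pi * (2 * P - tau * phi) by apply: mulr_ge0 => //; nra.
nra.
Qed.

Section ProjectiveSplitting.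
Context {R : realType} {n : nat} {H0 : hilbertType R} {Hs : 'I_n.-1 -> hilbertType R}.
Local Notation H := (Hblk H0 Hs).
Context {G : forall o, H0 -> H o} {Gs : forall o, H o -> H0}.
Hypotheses (G_adj : forall o, is_adjoint (G o) (Gs o)) (G_id : forall h, G None h = h).

Lemma sum_inner_adjoint h (v : forall o, H o) :
  \sum_o inner (G o h) (v o) = inner h (\sum_o Gs o (v o)).
Proof. by rewrite inner_sumr; apply: eq_bigr => o _; rewrite G_adj. Qed.

Lemma sum_inner_kernel (x t : forall o, H o) : \sum_o Gs o (t o) = 0 ->
  \sum_o inner (x o) (t o) =
  \sum_(j < n.-1) inner (x (Some j) - G (Some j) (x None)) (t (Some j)).
Proof.
rewrite big_option => /eqP; rewrite addrC addr_eq0 => /eqP tN.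
under [RHS]eq_bigr do rewrite innerBl.
rewrite sumrB big_option addrC; congr (_ + _).
under eq_bigr do rewrite G_adj.
by rewrite -inner_sumr tN innerNr -G_adj G_id opprK.
Qed.

Context {z : nat -> H0} {w x y : nat -> forall o, H o}.
Context {beta : option 'I_n.-1 -> \bar R} {gamma taulo tauhi : R} {tau : nat -> R}.

Definition ps_u k j := x k (Some j) - G (Some j) (x k None).

Definition ps_v k := \sum_o Gs o (y k o).

Definition ps_phi k :=
  inner (z k) (ps_v k) + \sum_(j < n.-1) inner (w k (Some j)) (ps_u k j)
  - \sum_o (inner (x k o) (y k o) + einv (beta o) / 4 * `|x k o - G o (z k)| ^+ 2).

Definition ps_pi k := gamma^-1 * `|ps_v k| ^+ 2 + \sum_(j < n.-1) `|ps_u k j| ^+ 2.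

Definition ps_update k : Prop :=
  let alpha := tau k * ps_phi k / ps_pi k in
  if 0 < ps_phi k then
    [/\ taulo <= tau k <= tauhi,
        z k.+1 = z k - (gamma^-1 * alpha) *: ps_v k &
        forall j, w k.+1 (Some j) = w k (Some j) - alpha *: ps_u k j]
  else z k.+1 = z k /\ forall j, w k.+1 (Some j) = w k (Some j).

Context {zs : H0} {ts : forall o, H o}.
Hypothesis ts_kernel : \sum_o Gs o (ts o) = 0.
Hypothesis ps_fejer : forall k o,
  - (einv (beta o) / 4 * `|x k o - G o (z k)| ^+ 2) <= inner (x k o - G o zs) (y k o - ts o).
Hypothesis ps_step : forall k, ps_update k.
Hypotheses (gamma_gt0 : 0 < gamma) (taulo_ge0 : 0 <= taulo) (tauhi_le2 : tauhi <= 2).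

Definition ps_dist k :=
  gamma * `|z k - zs| ^+ 2 + \sum_(j < n.-1) `|w k (Some j) - ts (Some j)| ^+ 2.

(* Summing the block inequalities shows that [phi_k] is nonpositive at the
   extended solution [(zs, ts)]. *)
Lemma ps_phi_le k : ps_phi k <=
  inner (z k - zs) (ps_v k) + \sum_(j < n.-1) inner (w k (Some j) - ts (Some j)) (ps_u k j).
Proof.
have hsum : 0 <= \sum_o (inner (x k o) (y k o)
    + einv (beta o) / 4 * `|x k o - G o (z k)| ^+ 2
    - inner (x k o) (ts o) - inner (G o zs) (y k o) + inner (G o zs) (ts o)).
  by apply: sumr_ge0 => o _; have := ps_fejer k o; rewrite !(innerBl, innerBr); lra.
rewrite big_split /= !sumrB sum_inner_kernel // !sum_inner_adjoint ts_kernel inner0r in hsum.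
rewrite /ps_phi innerBl; under [X in _ <= _ + X]eq_bigr do rewrite innerBl.
rewrite sumrB; under [X in _ <= _ + (_ - X)]eq_bigr do rewrite innerC.
rewrite /ps_v; lra.
Qed.

Lemma ps_dist_step {k a} :
  z k.+1 = z k - (gamma^-1 * a) *: ps_v k ->
  (forall j, w k.+1 (Some j) = w k (Some j) - a *: ps_u k j) ->
  ps_dist k.+1 = ps_dist k - 2 * a *
    (inner (z k - zs) (ps_v k) +
     \sum_(j < n.-1) inner (w k (Some j) - ts (Some j)) (ps_u k j))
    + a ^+ 2 * ps_pi k.
Proof.
move=> zE wE; rewrite /ps_dist zE addrAC sqr_normBZ.
under eq_bigr do rewrite wE addrAC sqr_normBZ.
rewrite big_split /= sumrB -!mulr_sumr /ps_pi; field; exact: lt0r_neq0.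
Qed.

Lemma ps_dist_le k : ps_dist k.+1 <= ps_dist k.
Proof.
have := ps_step k; rewrite /ps_update.
case: ifP => [phi0 [/andP[tlo thi] zE wE] | _ [zE wE]]; last first.
  by rewrite /ps_dist zE; under eq_bigr do rewrite wE.
apply: (relaxed_projection_decrease (ps_dist_step zE wE) (ps_phi_le k) phi0 _ _ erefl).
  by rewrite (le_trans taulo_ge0 tlo) (le_trans thi tauhi_le2).
apply: addr_ge0; last by apply: sumr_ge0 => j _; exact: sqr_ge0.
by rewrite mulr_ge0 ?sqr_ge0 // invr_ge0 ltW.
Qed.

Lemma ps_dist_le_init k : ps_dist k <= ps_dist 0.
Proof. by elim: k => // k IH; apply: le_trans (ps_dist_le k) IH. Qed.

Lemma ps_z_bounded : bounded_seq z.
Proof.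
apply: (bounded_seq_sqr_dist zs (ps_dist 0 / gamma)) => k.
rewrite ler_pdivlMr // mulrC; apply: le_trans (ps_dist_le_init k).
by rewrite /ps_dist lerDl; apply: sumr_ge0 => j _; exact: sqr_ge0.
Qed.

Lemma ps_wj_bounded j : bounded_seq (fun k => w k (Some j)).
Proof.
apply: (bounded_seq_sqr_dist (ts (Some j)) (ps_dist 0)) => k.
apply: le_trans (ps_dist_le_init k); rewrite /ps_dist (bigD1 j) //= addrCA lerDl.
apply: addr_ge0; last by apply: sumr_ge0 => i _; exact: sqr_ge0.
by rewrite mulr_ge0 ?sqr_ge0 // ltW.
Qed.

Hypothesis G_bnd : forall o, bounded_linear (G o).
Hypothesis w_last : forall k, w k None = - \sum_(j < n.-1) Gs (Some j) (w k (Some j)).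

Lemma ps_w_bounded o : bounded_seq (fun k => w k o).
Proof.
case: o => [j|]; first exact: ps_wj_bounded.
rewrite (_ : (fun k => _) = fun k => - \sum_(j < n.-1) Gs (Some j) (w k (Some j))).
  apply/bounded_seqN/bounded_seq_sum => j.
  have [M hM] := adjoint_norm_le (G_bnd (Some j)) (G_adj (Some j)).
  exact: bounded_seq_linear hM (ps_wj_bounded j).
by apply/funext => k; rewrite w_last.
Qed.

End ProjectiveSplitting.

Lemma uniform_bounds {R : realType} {I : finType} (f : I -> nat -> R) :
  (forall i, exists lo hi, 0 < lo /\ forall k, lo <= f i k <= hi) ->
  exists rmin rmax, 0 < rmin /\ forall k i, rmin <= f i k <= rmax.
Proof.
move=> hf.
have hp i : exists p : R * R, 0 < p.1 /\ forall k, p.1 <= f i k <= p.2.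
  by have [lo [hi h]] := hf i; exists (lo, hi).
have [b hb] := boolp.choice hp.
have lo_inv_ge0 i : 0 <= (b i).1^-1 by rewrite invr_ge0 ltW //; case: (hb i).
have S0 : 0 < 1 + \sum_i (b i).1^-1.
  have : 0 <= \sum_i (b i).1^-1 by apply: sumr_ge0.
  lra.
exists (1 + \sum_i (b i).1^-1)^-1, (\sum_i `|(b i).2|); split; first by rewrite invr_gt0.
move=> k i; have [lo0 /(_ k)/andP[lo_f f_hi]] := hb i; apply/andP; split.
  apply: le_trans lo_f; rewrite -[leRHS]invrK lef_pV2 ?posrE ?invr_gt0 //.
  rewrite (bigD1 i) //= addrCA lerDl addr_ge0 //.
  by apply: sumr_ge0.
rewrite (le_trans f_hi) // (le_trans (ler_norm _)) // (bigD1 i) //= lerDl.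
by apply: sumr_ge0.
Qed.

Theorem lemma4p3 (R : realType) (n : nat)
  (H0 : hilbertType R) (Hs : 'I_n.-1 -> hilbertType R)
  (G : forall o, H0 -> Hblk H0 Hs o) (Gs : forall o, Hblk H0 Hs o -> H0)
  (A : forall o, Hblk H0 Hs o -> set (Hblk H0 Hs o))
  (B C D : forall o, Hblk H0 Hs o -> Hblk H0 Hs o)
  (l : option 'I_n.-1 -> R) (beta : option 'I_n.-1 -> \bar R)
  (m : option 'I_n.-1 -> R) (inD : option 'I_n.-1 -> bool)
  (taulo tauhi thlo thhi rhohat dhat gamma : R)
  (z : nat -> H0) (w : nat -> forall o, Hblk H0 Hs o)
  (rho : nat -> option 'I_n.-1 -> R)
  (x y : nat -> forall o, Hblk H0 Hs o) (tau : nat -> R) :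
  (2 <= n)%N ->
  (* (A1): G_i bounded linear with adjoint Gs_i = G_i^*, G_n = I *)
  (forall o, bounded_linear (G o)) ->
  (forall o, is_adjoint (G o) (Gs o)) ->
  (forall h : H0, G None h = h) ->
  (* (A2)-(A5) *)
  (forall o, block_hyp (A o) (B o) (C o) (D o) (l o) (beta o) (m o)) ->
  (* (A6) *)
  (exists (zs : H0) (t : forall o, Hblk H0 Hs o),
      (forall o, Top (A o) (B o) (C o) (D o) (G o zs) (t o)) /\
      \sum_(o : option 'I_n.-1) Gs o (t o) = 0) ->
  (* (A7) *)
  (forall o, (inD o -> 0 < m o) /\
            (~~ inD o -> m o = 0 /\ forall h, D o h = 0)) ->
  (* parameters of Algorithm PS *)
  0 < taulo -> taulo < tauhi -> tauhi < 2 ->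
  0 < thlo -> thlo < thhi -> thhi < 2 ->
  0 < rhohat -> 0 < dhat -> 0 < gamma ->
  (* w_n^k := - sum_{i<n} G_i^* w_i^k *)
  (forall k, w k None = - \sum_(j < n.-1) Gs (Some j) (w k (Some j))) ->
  (* rules (i)-(iii) for every block and every iteration *)
  (forall k o, ps_block (A o) (B o) (C o) (D o) (l o) (beta o) (m o) (inD o)
      rhohat thlo thhi dhat (G o (z k)) (w k o) (rho k o) (x k o) (y k o)) ->
  (* projection / update step *)
  (forall k,
     let u := fun j : 'I_n.-1 => x k (Some j) - G (Some j) (x k None) in
     let v := \sum_(o : option 'I_n.-1) Gs o (y k o) in
     let phi := inner (z k) v + \sum_(j < n.-1) inner (w k (Some j)) (u j)
        - \sum_(o : option 'I_n.-1)
            (inner (x k o) (y k o)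
             + einv (beta o) / 4 * `|x k o - G o (z k)| ^+ 2) in
     let pi := gamma^-1 * `|v| ^+ 2 + \sum_(j < n.-1) `|u j| ^+ 2 in
     let alpha := tau k * phi / pi in
     if 0 < phi then
       [/\ taulo <= tau k <= tauhi,
           z k.+1 = z k - (gamma^-1 * alpha) *: v &
           forall j, w k.+1 (Some j) = w k (Some j) - alpha *: u j]
     else z k.+1 = z k /\ forall j, w k.+1 (Some j) = w k (Some j)) ->
  (* (A8) *)
  (forall o, ~~ inD o ->
     exists rlo rhi : R, [/\ 0 < rlo, rlo <= rhi,
       rhi * (einv (beta o) / 4 + l o) < 1 &
       forall k, ~ Top (A o) (B o) (C o) (D o) (G o (z k)) (w k o) ->
         rlo <= rho k o <= rhi]) ->
  [/\ (* (a) *) forall o, exists M : R, forall k, `|rho k o| <= M,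
      (* (b) *) forall o, exists M : R, forall k, `|x k o| <= M,
      (* (c) *) exists rmin rmax : R, 0 < rmin /\
                  forall k o, rmin <= rho k o <= rmax &
      (* (d) *) forall o, exists M : R, forall k, `|y k o| <= M].
Proof.
move=> _ hG hadj hGN hb [zs [ts [hTs hts]]] hA7 tlo0 _ thi2 thlo0 _ _ rhohat0 dhat0
  gamma0 hwN hps hupd hA8.
have D_off o : ~~ inD o -> forall h, D o h = 0 by move=> /(hA7 o).2[].
have hfej k o := ps_block_fejer (hb o) (D_off o) (hps k o) (hTs o).
have z_bnd := ps_z_bounded hadj hGN hts hfej hupd gamma0 (ltW tlo0) (ltW thi2).
have w_bnd := ps_w_bounded hadj hGN hts hfej hupd gamma0 (ltW tlo0) (ltW thi2) hG hwN.
have Gz_bnd o : bounded_seq (fun k => G o (z k)).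
  by have [_ [M hM]] := hG o; exact: bounded_seq_linear hM z_bnd.
have rho_nonsol o : ~~ inD o -> exists rlo rhi, 0 < rlo /\
    forall k, ~ Top (A o) (B o) (C o) (D o) (G o (z k)) (w k o) -> rlo <= rho k o <= rhi.
  by move=> /(hA8 o)[rlo [rhi [rlo0 _ _ h]]]; exists rlo, rhi.
have blk o := ps_block_bounds (hb o) (D_off o) (fun k => hps k o) (hTs o)
  (Gz_bnd o) (w_bnd o) rhohat0 thlo0 dhat0 (rho_nonsol o).
have [rmin [rmax [rmin0 hr]]] : exists rmin rmax, 0 < rmin /\
    forall k o, rmin <= rho k o <= rmax.
  by apply: (uniform_bounds (fun o k => rho k o)) => o; case: (blk o).
split=> [o | o | | o].
- exists rmax => k; have /andP[lo hi] := hr k o.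
  by rewrite ger0_norm // (le_trans (ltW rmin0)).
- by case: (blk o).
- by exists rmin, rmax.
- by case: (blk o).
Qed.
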